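(* Let $G$ be a bipartite graph with bipartition $(X,Y)$, $|X| = n\geq 2$, $|Y|=m$, every $x\in X$ having degree at least $\delta$. Let $(C,x)$ be a tight pair in $G$, with $C = y_1x_1y_2x_2\ldots y_\ell x_\ell y_1$ where $x_i \in X$, $y_i \in Y$. Let $1\le i<j\le \ell$. If $x_i$ and $x_j$ are not crossing in $C$, then $|N(x_i)\cap V(C)| + |N(x_j)\cap V(C)| \leq |V(C)\cap Y| + 2$.
   Context: A tight pair in $G$ is a pair $(C,x)$ where $C$ is a longest cycle in $G$ and $x \in X \setminus V(C)$, chosen such that $|N(x)\cap V(C)|$ is maximum over all pairs $(C',x')$ with $C'$ a longest cycle and $x' \in X\setminus V(C')$. Indices of $C$ are taken modulo $\ell$; for $1\le a,b\le \ell$, $C[a,b]$ denotes the segment of $C$ traversed in the direction $y_1\to x_1 \to y_2 \to \cdots$ from $y_a$ to $y_b$. For $1\le i<j\le\ell$, $x_i$ and $x_j$ are crossing in $C$ if there are indices $i',j'\in[\ell]$ with $y_{i'}\in N(x_i)$, $y_{j'}\in N(x_j)$, and either (a) $i' = j'+1$ with $i+1\le j'\le j-1$ (so $y_{i'},y_{j'} \in V(C[i+1,j])$), or (b) $j' = i'+1 \pmod \ell$ and $y_{i'},y_{j'}\in V(C[j+1,i])$. *)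

From mathcomp Require Import all_boot.
Set Implicit Arguments. Unset Strict Implicit. Unset Printing Implicit Defensive.

Section Defs.
Variable T : finType.
Variable e : rel T.

Definition simple_graph := symmetric e /\ irreflexive e.

Definition bipartition (X Y : {set T}) :=
  [/\ X :&: Y = set0, X :|: Y = setT &
      forall u v, e u v -> (u \in X) && (v \in Y) || (u \in Y) && (v \in X)].

Definition N (v : T) : {set T} := [set w | e v w].

Definition is_cycle (c : seq T) := [&& uniq c, cycle e c & 3 <= size c].

Definition longest_cycle (c : seq T) :=
  is_cycle c /\ forall c', is_cycle c' -> size c' <= size c.

(* the cycle C = y_0 x_0 y_1 x_1 ... y_(l-1) x_(l-1) y_0 (0-based indices) *)
Definition cyc (l : nat) (yv xv : nat -> T) : seq T :=
  flatten [seq [:: yv k; xv k] | k <- iota 0 l].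

Definition degC (v : T) (c : seq T) := #|N v :&: [set w | w \in c]|.

Definition tight_pair (X : {set T}) (c : seq T) (x : T) :=
  [/\ longest_cycle c, x \in X, x \notin c &
      forall c' x', longest_cycle c' -> x' \in X -> x' \notin c' ->
        degC x' c' <= degC x c].

(* index k (mod l) of y_k lies in the segment C[a,b] (traversed forward) *)
Definition in_seg (l a b k : nat) :=
  (k %% l + l - a %% l) %% l <= (b %% l + l - a %% l) %% l.

Definition crossing (l : nat) (yv xv : nat -> T) (i j : nat) :=
  exists i' j', [/\ i' < l, j' < l, e (xv i) (yv i'), e (xv j) (yv j') &
    ((i' = j'.+1 /\ i.+1 <= j' <= j.-1) \/
     (j' = i'.+1 %% l /\ in_seg l j.+1 i i' /\ in_seg l j.+1 i j'))].
End Defs.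

From mathcomp Require Import all_boot zify.
Set Implicit Arguments. Unset Strict Implicit.

(* Only the facts that C is a cycle and G is bipartite matter.  Every y_k of C is counted by x_i and x_j at most twice.  On the
   segment C[i+1, j] non-crossing forbids x_j ~ y_k together with
   x_i ~ y_(k+1), so reading the segment one index at a time loses at least
   one of these two adjacencies per step; hence that segment contributes at
   most its number of y's plus one.  The same holds, with the roles of x_i
   and x_j exchanged, on the complementary segment C[j+1, i], and the two
   segments together contain every y of C exactly once. *)

Lemma sum_no_consecutive_leq (n : nat) (f g : nat -> bool) :
  (forall k, k < n -> ~~ (f k && g k.+1)) ->
  \sum_(0 <= k < n.+1) (f k + g k) <= n + g 0 + f n.
Proof.
elim: n => [|n IH] fg_sep; first by rewrite big_nat1 addnC.
rewrite big_nat_recr //=.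
have := IH (fun k lt_kn => fg_sep k (ltnW lt_kn)).
by move: (fg_sep n (ltnSn n)); case: (f n); case: (g n.+1) => //= _; lia.
Qed.

Lemma sum_no_consecutive_leqS (n : nat) (f g : nat -> bool) :
  (forall k, k < n -> ~~ (f k && g k.+1)) ->
  \sum_(0 <= k < n.+1) (f k + g k) <= n.+2.
Proof.
move=> /sum_no_consecutive_leq /leq_trans; apply.
by case: (g 0); case: (f n) => /=; lia.
Qed.

Lemma sum_wrap_arc (l a b : nat) (F : nat -> nat) : a <= l -> b <= l ->
  \sum_(0 <= t < l - a + b) F ((t + a) %% l)
  = \sum_(a <= k < l) F k + \sum_(0 <= k < b) F k.
Proof.
move=> le_al le_bl; rewrite (big_cat_nat _ (n := l - a)) ?leq_addr //=.
congr (_ + _).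
- rewrite -[in RHS](add0n a) big_addn; apply: eq_big_nat => t /andP [_ lt_t].
  by rewrite modn_small //; lia.
- rewrite -{1}[l - a]add0n big_addn addKn; apply: eq_big_nat => t /andP [_ lt_tb].
  have -> : t + (l - a) + a = t + l by lia.
  by rewrite modnDr modn_small //; lia.
Qed.

Lemma seg_offset_shift (l a t : nat) : t < l ->
  ((t + a) %% l %% l + l - a %% l) %% l = t.
Proof.
move=> lt_tl; have l_gt0 : 0 < l by lia.
rewrite modn_mod -modnDmr.
have : a %% l < l by rewrite ltn_pmod.
move: (a %% l) => r lt_rl.
case: (ltnP (t + r) l) => [lt_trl|le_ltr].
- rewrite (modn_small lt_trl); have -> : t + r + l - r = t + l by lia.
  by rewrite modnDr modn_small.
- have -> : (t + r) %% l = t + r - l.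
    by rewrite -[in LHS](subnK le_ltr) modnDr modn_small //; lia.
  have -> : t + r - l + l - r = t by lia.
  exact: modn_small.
Qed.

Lemma in_seg_shift (l a s t : nat) : s < l -> t < l ->
  in_seg l a ((s + a) %% l) ((t + a) %% l) = (t <= s).
Proof. by move=> lt_sl lt_tl; rewrite /in_seg !seg_offset_shift. Qed.

Section CycleCounting.
Variables (T : finType) (yv xv : nat -> T).

Lemma cycS (l : nat) : cyc l.+1 yv xv = cyc l yv xv ++ [:: yv l; xv l].
Proof. by rewrite /cyc -addn1 iotaD map_cat flatten_cat /= add0n. Qed.

Lemma count_cyc (a : pred T) (l : nat) :
  count a (cyc l yv xv) = \sum_(0 <= k < l) (a (yv k) + a (xv k)).
Proof.
elim: l => [|l IH]; first by rewrite big_geq.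
by rewrite cycS count_cat IH big_nat_recr //= addn0.
Qed.

Lemma card_setI_mem_uniq (A : {set T}) (s : seq T) :
  uniq s -> #|A :&: [set w | w \in s]| = count (mem A) s.
Proof.
move=> s_uniq; rewrite -size_filter -(card_uniqP (filter_uniq _ s_uniq)).
by apply: eq_card => w; rewrite !inE mem_filter.
Qed.

Variable (e : rel T).

Lemma degC_cyc (l : nat) (v : T) : uniq (cyc l yv xv) ->
  (forall k, k < l -> ~~ e v (xv k)) ->
  degC e v (cyc l yv xv) = \sum_(0 <= k < l) e v (yv k).
Proof.
move=> c_uniq v_xv; rewrite /degC card_setI_mem_uniq // count_cyc.
apply: eq_big_nat => k /andP [_ lt_kl].
by rewrite /= !inE (negbTE (v_xv k lt_kl)) addn0.
Qed.

Lemma card_cyc_part (Y : {set T}) (l : nat) : uniq (cyc l yv xv) ->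
  (forall k, k < l -> yv k \in Y) -> (forall k, k < l -> xv k \notin Y) ->
  #|Y :&: [set w | w \in cyc l yv xv]| = l.
Proof.
move=> c_uniq yY xY; rewrite card_setI_mem_uniq // count_cyc.
rewrite -[RHS]subn0 -[RHS]muln1 -sum_nat_const_nat.
apply: eq_big_nat => k /andP [_ lt_kl].
by rewrite /= yY // (negbTE (xY k lt_kl)).
Qed.

End CycleCounting.

Lemma bipartition_notin_Y (T : finType) (e : rel T) (X Y : {set T}) (v : T) :
  bipartition e X Y -> v \in X -> v \notin Y.
Proof.
case=> disjXY _ _ vX; apply/negP => vY.
by have := in_set0 v; rewrite -disjXY inE vX vY.
Qed.

Lemma bipartition_nonadj (T : finType) (e : rel T) (X Y : {set T}) (u v : T) :
  bipartition e X Y -> u \in X -> v \in X -> ~~ e u v.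
Proof.
move=> bip uX vX; have [_ _ edge_XY] := bip; apply/negP => /edge_XY.
by rewrite (negbTE (bipartition_notin_Y bip uX))
           (negbTE (bipartition_notin_Y bip vX)) andbF.
Qed.

Section NonCrossing.
Variables (T : finType) (e : rel T) (l : nat) (yv xv : nat -> T) (i j : nat).
Hypotheses (lt_ij : i < j) (lt_jl : j < l) (no_cross : ~ crossing e l yv xv i j).

Lemma inner_segment_leq :
  \sum_(i.+1 <= k < j.+1) (e (xv i) (yv k) + e (xv j) (yv k)) <= (j - i).+1.
Proof.
pose f t := e (xv j) (yv (t + i.+1)); pose g t := e (xv i) (yv (t + i.+1)).
have sep t : t < j - i.+1 -> ~~ (f t && g t.+1).
  move=> lt_t; apply/andP => -[adj_j adj_i]; apply: no_cross.
  by exists (t.+1 + i.+1), (t + i.+1); split => //; lia.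
rewrite -[in X in X <= _](add0n i.+1) big_addn.
have -> : j.+1 - i.+1 = (j - i.+1).+1 by lia.
have -> : (j - i).+1 = (j - i.+1).+2 by lia.
rewrite (eq_bigr (fun t => f t + g t)) => [|t _]; last by rewrite addnC.
exact: sum_no_consecutive_leqS sep.
Qed.

Lemma outer_segment_leq :
  \sum_(0 <= k < i.+1) (e (xv i) (yv k) + e (xv j) (yv k))
  + \sum_(j.+1 <= k < l) (e (xv i) (yv k) + e (xv j) (yv k)) <= (l - j + i).+1.
Proof.
pose p t := (t + j.+1) %% l.
pose f t := e (xv i) (yv (p t)); pose g t := e (xv j) (yv (p t)).
have sep t : t < l - j.+1 + i -> ~~ (f t && g t.+1).
  move=> lt_t; apply/andP => -[adj_i adj_j]; apply: no_cross.
  have lt_pl s : p s < l by rewrite ltn_pmod //; lia.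
  have i_eq : i = p (l - j.+1 + i).
    rewrite /p; have -> : l - j.+1 + i + j.+1 = i + l by lia.
    by rewrite modnDr modn_small //; lia.
  exists (p t), (p t.+1); split => //; right; split.
  - by rewrite /p addSn -[(t + j.+1).+1]addn1 -modnDml addn1.
  - by rewrite i_eq !in_seg_shift //; lia.
rewrite addnC -(sum_wrap_arc (fun k => e (xv i) (yv k) + e (xv j) (yv k)) lt_jl
                               (ltn_trans lt_ij lt_jl)).
have -> : l - j.+1 + i.+1 = (l - j.+1 + i).+1 by lia.
have -> : (l - j + i).+1 = (l - j.+1 + i).+2 by lia.
exact: sum_no_consecutive_leqS sep.
Qed.

End NonCrossing.

Theorem lemma1 (T : finType) (e : rel T) (X Y : {set T}) (n m delta : nat)
  (l : nat) (yv xv : nat -> T) (x : T) (i j : nat) :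
  simple_graph e -> bipartition e X Y ->
  #|X| = n -> 2 <= n -> #|Y| = m ->
  (forall v, v \in X -> delta <= #|N e v|) ->
  (forall k, k < l -> yv k \in Y) -> (forall k, k < l -> xv k \in X) ->
  tight_pair e X (cyc l yv xv) x ->
  i < j -> j < l ->
  ~ crossing e l yv xv i j ->
  degC e (xv i) (cyc l yv xv) + degC e (xv j) (cyc l yv xv)
    <= #|Y :&: [set w | w \in cyc l yv xv]| + 2.
Proof.
move=> _ bip _ _ _ _ yY xX [[/and3P [c_uniq _ _] _] _ _ _] lt_ij lt_jl no_cross.
have lt_il := ltn_trans lt_ij lt_jl.
have nonadj_xv v : v \in X -> forall k, k < l -> ~~ e v (xv k).
  by move=> vX k lt_kl; apply: bipartition_nonadj bip vX (xX k lt_kl).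
have xv_notin_Y k : k < l -> xv k \notin Y.
  by move=> lt_kl; apply: bipartition_notin_Y bip (xX k lt_kl).
rewrite (degC_cyc c_uniq (nonadj_xv _ (xX i lt_il))).
rewrite (degC_cyc c_uniq (nonadj_xv _ (xX j lt_jl))).
rewrite (card_cyc_part c_uniq yY xv_notin_Y) -big_split /=.
rewrite (big_cat_nat _ (n := i.+1)) //=.
rewrite (big_cat_nat _ (m := i.+1) (n := j.+1)) //=; last exact: ltnW lt_ij.
have := inner_segment_leq lt_ij lt_jl no_cross.
have := outer_segment_leq lt_ij lt_jl no_cross.
lia.
Qed.
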